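(* Let $X\subset\mathbb{R}^d$ and $x\in\partial X$. Then $\operatorname{Tan}(\partial X,x)=\operatorname{Tan}(X,x)\cap\operatorname{Tan}(\mathcal{C}X,x)$.
   Context: $\mathcal{C}X:=\overline{\mathbb{R}^d\setminus X}$ and $\partial X=\overline X\setminus\operatorname{int}X$. For $A\subset\mathbb{R}^d$, the tangent cone $\operatorname{Tan}(A,x)$ is the cone generated by all limits $\lim_n (x_n-x)/\|x_n-x\|$ with $x_n\in A\setminus\{x\}$, $x_n\to x$. *)

From HB Require Import structures.
From mathcomp Require Import all_boot all_order all_algebra.
From mathcomp Require Import all_classical all_reals all_analysis.
Set Implicit Arguments. Unset Strict Implicit. Unset Printing Implicit Defensive.
Import Order.TTheory GRing.Theory Num.Theory.
Import numFieldNormedType.Exports.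
Local Open Scope classical_set_scope.
Local Open Scope ring_scope.

Section TanCone.
Variables (R : realType) (d : nat).

Definition enorm (v : 'rV[R]_d) : R := Num.sqrt (\sum_(i < d) (v ord0 i) ^+ 2).

Definition compl_cl (X : set 'rV[R]_d) : set 'rV[R]_d := closure (~` X).

Definition bdry (X : set 'rV[R]_d) : set 'rV[R]_d := closure X `\` interior X.

Definition tan_dirs (A : set 'rV[R]_d) (x : 'rV[R]_d) : set 'rV[R]_d :=
  [set u | exists s : nat -> 'rV[R]_d,
     (forall n, A (s n) /\ s n <> x) /\
     (s @ \oo --> x) /\
     ((fun n => (enorm (s n - x))^-1 *: (s n - x)) @ \oo --> u)].

Definition Tan (A : set 'rV[R]_d) (x : 'rV[R]_d) : set 'rV[R]_d :=
  [set v | v = 0 \/ exists t u, 0 <= t /\ tan_dirs A x u /\ v = t *: u].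

End TanCone.

From HB Require Import structures.
From mathcomp Require Import all_boot all_order all_algebra.
From mathcomp Require Import all_classical all_reals all_analysis.
From mathcomp Require Import ring lra.
Set Implicit Arguments. Unset Strict Implicit. Unset Printing Implicit Defensive.
Import Order.TTheory GRing.Theory Num.Theory.
Import numFieldNormedType.Exports.
Local Open Scope classical_set_scope.
Local Open Scope ring_scope.

(* Tangent directions are unit vectors, so the cone over an intersection of
   sets of directions is the intersection of the cones: it suffices to show
   that the tangent directions of the boundary are those common to X and CX.
   As the boundary is cl X ∩ CX, one inclusion holds because a point of cl A
   can be replaced by a point of A much closer to it than to x. Conversely,
   if a_n ∈ X and b_n ∈ CX approach x in direction u, the segment [a_n, b_n]
   meets the boundary at some c_n by connectedness; c_n - x is a convex
   combination of a_n - x and b_n - x, so a positive multiple of it is a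
   convex combination of their normalizations, which both tend to u. *)

Section Normalize.
Variables (R : realType) (d : nat).
Implicit Types (u v : 'rV[R]_d).

Lemma enorm_continuous : continuous (@enorm R d).
Proof.
have sum_continuous (s : seq 'I_d) :
    continuous (fun v : 'rV[R]_d => \sum_(i <- s) (v ord0 i) ^+ 2).
  elim: s => [|i s IHs].
    under [fun v => _]funext do rewrite big_nil; exact: cst_continuous.
  have -> : (fun v : 'rV[R]_d => \sum_(j <- i :: s) (v ord0 j) ^+ 2) =
      (fun v => v ord0 i * v ord0 i) + (fun v => \sum_(j <- s) (v ord0 j) ^+ 2).
    by apply: funext => v; rewrite big_cons expr2.
  move=> v; apply: continuousD; last exact: IHs.
  by apply: continuousM; apply: coord_continuous.
by move=> v; apply: continuous_comp (sum_continuous _ v) (@sqrt_continuous R _).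
Qed.

Lemma enormZ (t : R) v : enorm (t *: v) = `|t| * enorm v.
Proof.
rewrite /enorm -sqrtr_sqr -sqrtrM ?sqr_ge0 // mulr_sumr.
by congr Num.sqrt; apply: eq_bigr => i _; rewrite mxE exprMn.
Qed.

Lemma enorm0 : enorm (0 : 'rV[R]_d) = 0.
Proof. by rewrite -(scale0r (0 : 'rV[R]_d)) enormZ normr0 mul0r. Qed.

Lemma enorm_gt0 v : v != 0 -> 0 < enorm v.
Proof.
move=> v_neq0; have [i vi_neq0] : exists i, v ord0 i != 0.
  apply/existsP; apply: contraR v_neq0 => /existsPn vi0.
  by apply/eqP/rowP => i; rewrite mxE; apply/eqP/negbNE/vi0.
rewrite /enorm sqrtr_gt0 (bigD1 i) //= ltr_pwDl //.
  by rewrite lt_def sqrf_eq0 vi_neq0 sqr_ge0.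
by apply: sumr_ge0 => j _; rewrite sqr_ge0.
Qed.

Definition normalize v := (enorm v)^-1 *: v.

Lemma normalizeZ (t : R) v : 0 < t -> normalize (t *: v) = normalize v.
Proof.
move=> t_gt0; rewrite /normalize enormZ gtr0_norm // scalerA invfM mulrAC.
by rewrite mulVf ?gt_eqF // mul1r.
Qed.

Lemma enorm_normalize v : v != 0 -> enorm (normalize v) = 1.
Proof.
move=> /enorm_gt0 v_gt0.
by rewrite enormZ gtr0_norm ?invr_gt0 // mulVf ?gt_eqF.
Qed.

Lemma normalize_unit u : enorm u = 1 -> normalize u = u.
Proof. by move=> u1; rewrite /normalize u1 invr1 scale1r. Qed.

Lemma normalize_continuous u : enorm u != 0 -> {for u, continuous normalize}.
Proof.
move=> u_neq0; apply: continuousZ; last exact: cvg_id.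
by apply: continuousV => //; exact: enorm_continuous.
Qed.

End Normalize.

Section ConvexCombination.
Variables (R : realType) (V : normedModType R).

Lemma norm_le_cvg0 {T : Type} (F : set_system T) {FF : Filter F}
    (f : T -> V) (g : T -> R) :
  (forall t, `|f t| <= g t) -> g @ F --> 0 -> f @ F --> 0.
Proof.
move=> fg g0; apply: norm_cvg0.
apply: (@squeeze_cvgr _ _ _ _ (fun=> 0) g); last exact: g0.
  by near=> t; rewrite normr_ge0 fg.
exact: cvg_cst.
Unshelve. all: by end_near.
Qed.

Lemma cvg_convex_comb {T : Type} (F : set_system T) {FF : Filter F}
    (p : T -> R) (f g : T -> V) (l : V) :
  (forall t, 0 <= p t <= 1) -> f @ F --> l -> g @ F --> l ->
  (fun t => p t *: f t + (1 - p t) *: g t) @ F --> l.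
Proof.
move=> p01 /subr_cvg0/norm_cvg0P fl /subr_cvg0/norm_cvg0P gl; apply/subr_cvg0.
apply: (norm_le_cvg0 (g := fun t => `|f t - l| + `|g t - l|)); last first.
  by rewrite -[0]addr0; apply: cvgD.
move=> t; have /andP[p_ge0 p_le1] := p01 t.
have -> : p t *: f t + (1 - p t) *: g t - l =
    p t *: (f t - l) + (1 - p t) *: (g t - l).
  by rewrite !scalerBr addrACA -opprD -scalerDl subrKC scale1r.
apply: le_trans (ler_normD _ _) _; rewrite !normrZ !ger0_norm ?subr_ge0 //.
by apply: lerD; apply: ler_piMl; rewrite ?normr_ge0 ?gerBl.
Qed.

Lemma segment_frontier (X : set V) a b : closure X a -> closure (~` X) b ->
  exists2 p : R, 0 <= p <= 1 &
    (closure X `&` closure (~` X)) (p *: a + (1 - p) *: b).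
Proof.
move=> Xa Xb; apply: contrapT => no_frontier.
pose f p := p *: a + (1 - p) *: b.
have f_cont : continuous f.
  move=> p; apply: cvgD; apply: cvgZr_tmp; first exact: cvg_id.
  by apply: cvgB; [exact: cvg_cst | exact: cvg_id].
have f_conn : connected (f @` `[0, 1]).
  apply: connected_continuous_connected; first exact: segment_connected.
  exact: continuous_subspaceT.
have sep : separated X° (~` X)°.
  rewrite interiorC; split; apply/seteqP; split => // z [].
  - by move=> /(closureS (@interior_subset _ X)) Xz; apply.
  - move=> Xz /(closureS (subsetC (@subset_closure _ X))).
    by rewrite closure_setC; apply.
have cover : f @` `[0, 1] `<=` X° `|` (~` X)°.
  move=> _ [p p01 <-]; rewrite interiorC.
  have [Xfp|] := pselect (closure X (f p)); last by right.
  left; apply: contrapT => Xfp_out; apply: no_frontier.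
  exists p; first by move: p01; rewrite /= in_itv.
  by split => //; rewrite closure_setC.
have f_endpoint p : p = 0 \/ p = 1 -> (f @` `[0, 1]) (f p).
  move=> p01; exists p => //; rewrite /= in_itv.
  by case: p01 => -> /=; rewrite lexx ler01.
have [f_int|f_ext] := connected_subset sep cover f_conn.
- move: Xb; rewrite closure_setC; apply.
  have := f_int _ (f_endpoint 0 (or_introl erefl)).
  by rewrite /f scale0r add0r subr0 scale1r.
- have := f_ext _ (f_endpoint 1 (or_intror erefl)).
  by rewrite /f scale1r subrr scale0r addr0 interiorC; apply.
Qed.

End ConvexCombination.

Section Cone.
Variables (R : realType) (d : nat).
Implicit Types (S : set 'rV[R]_d).

Definition cone S := [set v | v = 0 \/ exists t u, 0 <= t /\ S u /\ v = t *: u].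

Lemma coneS S S' : S `<=` S' -> cone S `<=` cone S'.
Proof.
move=> SS' v [->|[t [u [t_ge0 [Su ->]]]]]; first by left.
by right; exists t, u; split => //; split => //; exact: SS'.
Qed.

Lemma coneI S S' :
  S `<=` [set u | enorm u = 1] -> S' `<=` [set u | enorm u = 1] ->
  cone S `&` cone S' = cone (S `&` S').
Proof.
move=> S1 S'1; apply/seteqP; split; last first.
  by move=> v Sv; split; apply: coneS Sv => u [].
move=> _ [[->|[t [u [t_ge0 [Su ->]]]]]]; first by left.
move=> [|[t' [u' [t'_ge0 [S'u' tu_eq]]]]]; first by left.
have tt' : t = t'.
  have := congr1 (@enorm R d) tu_eq.
  by rewrite !enormZ S1 // S'1 // !mulr1 !ger0_norm.
have [->|t_neq0] := eqVneq t 0; first by left; rewrite scale0r.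
right; exists t, u; split => //; split => //; split => //.
by rewrite -(scalerK t_neq0 u) tu_eq -tt' scalerK.
Qed.

End Cone.

Section TangentDirections.
Variables (R : realType) (d : nat).
Implicit Types (A X : set 'rV[R]_d) (x u : 'rV[R]_d).

Lemma TanE A x : Tan A x = cone (tan_dirs A x).
Proof. by []. Qed.

Lemma tan_dirs_enorm A x : tan_dirs A x `<=` [set u | enorm u = 1].
Proof.
move=> u [s [As [_ su]]].
have := cvg_comp _ _ su (@enorm_continuous R d u).
have -> : @enorm R d \o (fun n => normalize (s n - x)) = fun=> 1.
  apply: funext => n /=; rewrite enorm_normalize // subr_eq0.
  by apply/eqP; case: (As n).
by move/(cvg_lim (@norm_hausdorff _ _)); rewrite lim_cst.
Qed.

Lemma tan_dirsS A X x : A `<=` X -> tan_dirs A x `<=` tan_dirs X x.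
Proof.
move=> AX u [s [As s_cvg]]; exists s; split => // n.
by have [? ?] := As n; split => //; exact: AX.
Qed.

Lemma tan_dirs_rescaled A x u (s : nat -> 'rV[R]_d) (c : nat -> R) :
  enorm u = 1 -> (forall n, A (s n)) -> (forall n, 0 < c n) ->
  s @ \oo --> x -> (fun n => (c n)^-1 *: (s n - x)) @ \oo --> u ->
  tan_dirs A x u.
Proof.
move=> u1 As c_gt0 sx su.
have u_neq0 : u != 0.
  by apply: contra_eq_neq u1 => ->; rewrite enorm0 eq_sym oner_neq0.
have [N _ sN] : \forall n \near \oo, s n != x.
  have u_gt0 : 0 < `|u| by rewrite normr_gt0.
  apply: filterS (cvgr_norm_gt _ su _ u_gt0) => n.
  by apply: contraTneq => ->; rewrite subrr scaler0 normr0 ltxx.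
have normalize_cvg : (fun n => normalize (s n - x)) @ \oo --> u.
  rewrite -[in X in _ --> X](normalize_unit u1).
  apply: cvg_trans (cvg_comp _ _ su (normalize_continuous _)); last first.
    by rewrite u1 oner_neq0.
  by apply: near_eq_cvg; near=> n; rewrite /= normalizeZ ?invr_gt0.
exists (fun n => s (n + N)%N); split; last split.
- by move=> n; split; [exact: As | apply/eqP/sN; rewrite /= leq_addl].
- by rewrite (cvg_shiftn N s).
- by move: normalize_cvg; rewrite -(cvg_shiftn N).
Unshelve. all: by end_near.
Qed.

Lemma tan_dirs_closure A x : tan_dirs (closure A) x `<=` tan_dirs A x.
Proof.
move=> u u_tan; have u1 := tan_dirs_enorm u_tan.
case: u_tan => s [As [sx su]].
pose m n := `|s n - x|; pose e n := enorm (s n - x).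
have s_neq n : s n - x != 0 by rewrite subr_eq0; apply/eqP; case: (As n).
have m_gt0 n : 0 < m n by rewrite normr_gt0.
have e_gt0 n : 0 < e n by apply: enorm_gt0.
have m_cvg0 : m @ \oo --> 0 by apply/norm_cvg0P/subr_cvg0.
have /choice[y yA] n : exists z, A z /\ `|z - s n| < Num.min (m n) (e n * m n).
  have r_gt0 : 0 < Num.min (m n) (e n * m n).
    by rewrite lt_min m_gt0 mulr_gt0.
  have [z [Az s_z]] := (As n).1 _ (nbhsx_ballx (s n) _ r_gt0).
  by exists z; split => //; move: s_z; rewrite -ball_normE /= distrC.
have ys_le_m n : `|y n - s n| <= m n.
  by have [_ /ltW] := yA n; rewrite le_min => /andP[].
have ys_le_em n : (e n)^-1 * `|y n - s n| <= m n.
  rewrite ler_pdivrMl //.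
  by have [_ /ltW] := yA n; rewrite le_min => /andP[].
apply: (tan_dirs_rescaled (c := e) u1 (fun n => (yA n).1) e_gt0).
- have -> : y = fun n => s n + (y n - s n).
    by apply: funext => n; rewrite addrC subrK.
  by rewrite -[x]addr0; apply: cvgD => //; apply: norm_le_cvg0 m_cvg0.
- have -> : (fun n => (e n)^-1 *: (y n - x)) =
      fun n => (e n)^-1 *: (s n - x) + (e n)^-1 *: (y n - s n).
    by apply: funext => n; rewrite -scalerDr [s n - x + _]addrC addrA subrK.
  rewrite -[u]addr0; apply: cvgD => //; apply: norm_le_cvg0 m_cvg0 => n.
  by rewrite normrZ ger0_norm ?invr_ge0 ?(ltW (e_gt0 n)).
Qed.

Lemma tan_dirs_frontier X x :
  tan_dirs (closure X) x `&` tan_dirs (closure (~` X)) x `<=`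
  tan_dirs (closure X `&` closure (~` X)) x.
Proof.
move=> u [ua_tan ub_tan]; have u1 := tan_dirs_enorm ua_tan.
case: ua_tan => a [Xa [ax au]]; case: ub_tan => b [Xb [bx bu]].
have /choice[p pP] n : exists p : R,
    0 <= p <= 1 /\ (closure X `&` closure (~` X)) (p *: a n + (1 - p) *: b n).
  by have [l ? ?] := segment_frontier (Xa n).1 (Xb n).1; exists l.
have p01 n := (pP n).1; have Xc n := (pP n).2.
pose ea n := enorm (a n - x); pose eb n := enorm (b n - x).
have ea_gt0 n : 0 < ea n.
  by apply/enorm_gt0; rewrite subr_eq0; apply/eqP; case: (Xa n).
have eb_gt0 n : 0 < eb n.
  by apply/enorm_gt0; rewrite subr_eq0; apply/eqP; case: (Xb n).
(* Dividing c n - x by k n turns it into the convex combination, with weight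
   q n, of the normalizations of a n - x and b n - x. *)
pose k n := p n * ea n + (1 - p n) * eb n.
have k_gt0 n : 0 < k n.
  have /andP[? ?] := p01 n; have := ea_gt0 n; have := eb_gt0 n.
  by rewrite /k; nra.
pose q n := p n * ea n / k n.
have q01 n : 0 <= q n <= 1.
  have /andP[p_ge0 p_le1] := p01 n.
  rewrite divr_ge0 ?mulr_ge0 ?(ltW (ea_gt0 n)) ?(ltW (k_gt0 n)) //=.
  rewrite ler_pdivrMr // mul1r.
  by rewrite /k lerDl mulr_ge0 ?subr_ge0 ?(ltW (eb_gt0 n)).
pose c n := p n *: a n + (1 - p n) *: b n.
apply: (tan_dirs_rescaled (s := c) u1 Xc k_gt0); first exact: cvg_convex_comb.
have -> : (fun n => (k n)^-1 *: (c n - x)) =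
    fun n => q n *: normalize (a n - x) + (1 - q n) *: normalize (b n - x).
  apply: funext => n; have := k_gt0 n; have := ea_gt0 n; have := eb_gt0 n.
  rewrite /q /k /normalize -/(ea n) -/(eb n) => ? ? ?.
  by apply/rowP => i; rewrite !mxE; field; rewrite !gt_eqF.
exact: cvg_convex_comb.
Qed.

Lemma tan_dirs_bdry X x :
  tan_dirs (bdry X) x = tan_dirs X x `&` tan_dirs (compl_cl X) x.
Proof.
have bdryE : bdry X = closure X `&` closure (~` X).
  by rewrite /bdry closure_setC setDE.
apply/seteqP; split => u.
- rewrite bdryE => u_tan; split; last by apply: tan_dirsS u_tan => ? [].
  by apply/tan_dirs_closure; apply: tan_dirsS u_tan => ? [].
- move=> [/(tan_dirsS (@subset_closure _ X)) Xu Cu].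
  by rewrite bdryE; apply: tan_dirs_frontier.
Qed.

End TangentDirections.

Theorem mainTheorem15 (R : realType) (d : nat) (X : set 'rV[R]_d) (x : 'rV[R]_d)
  (hx : bdry X x) :
  Tan (bdry X) x = Tan X x `&` Tan (compl_cl X) x.
Proof.
by rewrite [LHS]TanE tan_dirs_bdry -coneI //; apply: tan_dirs_enorm.
Qed.
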